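(* Let $f_1,\dots,f_n:\mathbb{R}^d\to\mathbb{R}$ be convex with each $f_i$ being $L_i$-smooth, let $f = \frac{1}{n}\sum_i f_i$ and let $x^*$ be a minimizer of $f$. Let $\mathcal{C}_1,\dots,\mathcal{C}_n$ be independent randomized compression operators with $\mathcal{C}_i\in\mathbb{B}^d(\omega_i)$, and let $\beta_i\in(0, \frac{1}{\omega_i+1}]$ for each $i$. For points $x^k, h_1^k,\dots,h_n^k$ define $h_i^{k+1} = h_i^k + \beta_i\mathcal{C}_i(\nabla f_i(x^k) - h_i^k)$ and $\sigma_k^2 = \frac{1}{n}\sum_{i=1}^n\omega_i\|h_i^k - \nabla f_i(x^* )\|^2$ (and analogously $\sigma_{k+1}^2$ with $h_i^{k+1}$). Then \[ \mathbb{E}\,\sigma_{k+1}^2 \leq (1 - \min_i\beta_i)\sigma_k^2 + 2\max_i\{\beta_i\omega_iL_i\}\,D_f(x^k,x^* ), \] where the expectation is over the compressors.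
   Context: A (random) operator $\mathcal{C}$ belongs to $\mathbb{B}^d(\omega)$ if $\mathbb{E}[\mathcal{C}(x)] = x$ and $\mathbb{E}\|\mathcal{C}(x)-x\|^2\leq\omega\|x\|^2$ for all $x$. The Bregman divergence is $D_f(x,y) = f(x)-f(y)-\langle\nabla f(y),x-y\rangle$. A differentiable $g$ is $L$-smooth if $\|\nabla g(x)-\nabla g(y)\|\leq L\|x-y\|$ for all $x,y$. *)

From HB Require Import structures.
From mathcomp Require Import all_boot all_order all_algebra.
From mathcomp Require Import all_classical all_reals all_analysis.
Set Implicit Arguments. Unset Strict Implicit. Unset Printing Implicit Defensive.
Import Order.TTheory GRing.Theory Num.Theory.
Import numFieldNormedType.Exports.
Local Open Scope classical_set_scope.
Local Open Scope ring_scope.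

Section Defs.
Variable R : realType.
Variable d : nat.
Local Notation V := 'rV[R]_d.

Definition dotv (u v : V) : R := \sum_(j < d) u ord0 j * v ord0 j.
Definition sqnorm (v : V) : R := dotv v v.
Definition enorm (v : V) : R := Num.sqrt (sqnorm v).

Definition grad (f : V -> R) (x : V) : V :=
  \row_(j < d) ('d f x) (delta_mx ord0 j : V).

Definition convex_fun (f : V -> R) : Prop :=
  forall (x y : V) (t : R), 0 <= t <= 1 ->
    f (t *: x + (1 - t) *: y) <= t * f x + (1 - t) * f y.

Definition smooth (L : R) (f : V -> R) : Prop :=
  (forall x, differentiable f x) /\
  forall x y : V, enorm (grad f x - grad f y) <= L * enorm (x - y).

Definition bregman (f : V -> R) (x y : V) : R :=
  f x - f y - dotv (grad f y) (x - y).

(* C : Omega -> (R^d -> R^d) is a random operator in B^d(omega) w.r.t. P: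
   unbiased (coordinatewise integrable with mean x) and
   E ||C(x) - x||^2 <= omega ||x||^2. *)
Definition in_B {dO} {Omega : measurableType dO} (P : probability Omega R)
    (omega : R) (C : Omega -> V -> V) : Prop :=
  forall x : V,
    (forall j : 'I_d,
       P.-integrable setT (fun w => ((C w x) ord0 j)%:E) /\
       (\int[P]_w ((C w x) ord0 j)%:E = (x ord0 j)%:E)%E) /\
    (\int[P]_w (sqnorm (C w x - x))%:E <= (omega * sqnorm x)%:E)%E.

(* Mutual independence of the random operators C_1,...,C_n: for every finite
   family of evaluation points and Borel sets, the joint law of the
   finite-dimensional evaluations factorizes across operators. *)
Definition indep_ops {dO} {Omega : measurableType dO} (P : probability Omega R)
    (n : nat) (C : 'I_n -> Omega -> V -> V) : Prop :=
  forall (m : nat) (x : 'I_n -> 'I_m -> V) (A : 'I_n -> 'I_m -> 'I_d -> set R),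
    (forall i l j, measurable (A i l j)) ->
    P [set w | forall i l j, A i l j ((C i w (x i l)) ord0 j)] =
    (\prod_(i < n) P [set w | forall l j, A i l j ((C i w (x i l)) ord0 j)])%E.

End Defs.

From HB Require Import structures.
From mathcomp Require Import all_boot all_order all_algebra.
From mathcomp Require Import all_classical all_reals all_analysis.
From mathcomp Require Import ring lra.
Import Order.TTheory GRing.Theory Num.Theory.
Import numFieldNormedType.Exports.
Local Open Scope classical_set_scope.
Local Open Scope ring_scope.

Set Implicit Arguments. Unset Strict Implicit. Unset Printing Implicit Defensive.

(** Each node is handled on its own and only through the first two moments of
    its compressor.  With [e = h_i - grad f_i xstar] and
    [u = grad f_i xk - h_i], unbiasedness and the variance bound give
    [E |e + beta C(u)|^2 <= |e + beta u|^2 + beta^2 omega |u|^2]; as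
    [beta (omega + 1) <= 1], the variance term is absorbed by the convexity
    defect [beta (1 - beta) |u|^2] of the squared norm, leaving
    [(1 - beta) |e|^2 + beta |grad f_i xk - grad f_i xstar|^2].  Co-coercivity
    of gradients of convex [L]-smooth functions bounds the last norm by
    [2 L_i D_{f_i}(xk, xstar)], and the Bregman divergence of the average [f] is
    the average of those of the [f_i]. *)

Section Euclidean.
Variables (R : realType) (d : nat).
Local Notation V := 'rV[R]_d.
Implicit Types (u v w e c : V) (a : R).

Lemma dotvC u v : dotv u v = dotv v u.
Proof. by apply: eq_bigr => j _; rewrite mulrC. Qed.

Lemma dotvDl u v w : dotv (u + v) w = dotv u w + dotv v w.
Proof. by rewrite /dotv -big_split; apply: eq_bigr => j _; rewrite mxE mulrDl. Qed.

Lemma dotvZl a u w : dotv (a *: u) w = a * dotv u w.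
Proof. by rewrite /dotv mulr_sumr; apply: eq_bigr => j _; rewrite mxE mulrA. Qed.

Lemma dotvNl u w : dotv (- u) w = - dotv u w.
Proof. by rewrite -scaleN1r dotvZl mulN1r. Qed.

Lemma dotvBl u v w : dotv (u - v) w = dotv u w - dotv v w.
Proof. by rewrite dotvDl dotvNl. Qed.

Lemma dotv0l w : dotv 0 w = 0.
Proof. by rewrite -(scale0r (0 : V)) dotvZl mul0r. Qed.

Lemma dotvDr u v w : dotv w (u + v) = dotv w u + dotv w v.
Proof. by rewrite dotvC dotvDl !(dotvC w). Qed.

Lemma dotvZr a u w : dotv w (a *: u) = a * dotv w u.
Proof. by rewrite dotvC dotvZl dotvC. Qed.

Lemma dotvNr u w : dotv w (- u) = - dotv w u.
Proof. by rewrite dotvC dotvNl dotvC. Qed.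

Lemma dotv0r w : dotv w 0 = 0.
Proof. by rewrite dotvC dotv0l. Qed.

Lemma sqnorm_ge0 u : 0 <= sqnorm u.
Proof. by apply: sumr_ge0 => j _; rewrite -expr2 sqr_ge0. Qed.

Lemma sqnorm_eq0 u : sqnorm u = 0 -> u = 0.
Proof.
move=> /eqP; rewrite psumr_eq0 => [/allP u0|j _]; last by rewrite -expr2 sqr_ge0.
apply/rowP => j; rewrite mxE.
by have /(_ (mem_index_enum j)) := u0 j; rewrite -expr2 sqrf_eq0 => /eqP.
Qed.

Lemma sqnormD u v : sqnorm (u + v) = sqnorm u + 2 * dotv u v + sqnorm v.
Proof. by rewrite /sqnorm !dotvDl !dotvDr (dotvC v u); ring. Qed.

Lemma sqnormZ a u : sqnorm (a *: u) = a ^+ 2 * sqnorm u.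
Proof. by rewrite /sqnorm dotvZl dotvZr mulrA -expr2. Qed.

Lemma sqnormN u : sqnorm (- u) = sqnorm u.
Proof. by rewrite -scaleN1r sqnormZ sqrrN expr1n mul1r. Qed.

Lemma enorm_ge0 u : 0 <= enorm u.
Proof. exact: sqrtr_ge0. Qed.

Lemma enorm_sqr u : enorm u ^+ 2 = sqnorm u.
Proof. by rewrite sqr_sqrtr // sqnorm_ge0. Qed.

Lemma enormZ a u : enorm (a *: u) = `|a| * enorm u.
Proof. by rewrite /enorm sqnormZ sqrtrM ?sqr_ge0 // sqrtr_sqr. Qed.

Lemma enorm_eq0 u : enorm u = 0 -> u = 0.
Proof. by move=> u0; apply: sqnorm_eq0; rewrite -enorm_sqr u0 expr0n. Qed.

Lemma dotv_le_enorm u v : dotv u v <= enorm u * enorm v.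
Proof.
have [/eqP|uv0] := eqVneq (enorm u * enorm v) 0.
  by rewrite mulf_eq0 => /orP[] /eqP/enorm_eq0 ->; rewrite ?dotv0l ?dotv0r mulr_ge0 ?enorm_ge0.
have uv_gt0 : 0 < enorm u * enorm v by rewrite lt_def uv0 mulr_ge0 ?enorm_ge0.
rewrite -(ler_pM2l uv_gt0) -expr2.
have := sqnorm_ge0 (enorm v *: u - enorm u *: v).
rewrite sqnormD sqnormN !sqnormZ dotvNr dotvZl dotvZr -!enorm_sqr exprMn; nra.
Qed.

Lemma sqnorm_segment a e u :
  sqnorm (e + a *: u) = (1 - a) * sqnorm e + a * sqnorm (e + u) - a * (1 - a) * sqnorm u.
Proof. by rewrite !sqnormD sqnormZ dotvZr; ring. Qed.

Lemma sqnorm_shift a e u c :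
  sqnorm (e + a *: c) =
  sqnorm (e + a *: u) + 2 * a * dotv (e + a *: u) (c - u) + a ^+ 2 * sqnorm (c - u).
Proof.
have -> : e + a *: c = (e + a *: u) + a *: (c - u) by rewrite scalerBr addrA addrAC addrK.
by rewrite sqnormD sqnormZ dotvZr mulrA.
Qed.

End Euclidean.

Section Differential.
Variables (R : realType) (d : nat).
Local Notation V := 'rV[R]_d.
Implicit Types (f : V -> R) (v x y z : V).

Lemma dotv_grad f x v : dotv (grad f x) v = 'd f x v.
Proof.
rewrite [in RHS](row_sum_delta v) linear_sum; apply: eq_bigr => j _.
by rewrite mxE linearZ /= mulrC.
Qed.

Lemma is_derive_line f x v t : differentiable f (x + t *: v) ->
  is_derive t 1 (fun s : R => f (x + s *: v)) (dotv (grad f (x + t *: v)) v).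
Proof.
move=> df; rewrite dotv_grad.
have quotE : (fun h : R => h^-1 *: (((fun s => f (x + s *: v)) \o shift t) (h *: 1)
                                    - f (x + t *: v)))
           = (fun h : R => h^-1 *: ((f \o shift (x + t *: v)) (h *: v) - f (x + t *: v))).
  apply/funext => h /=; rewrite /shift /= [_%:A]mulr1 scalerDl.
  by rewrite addrCA addrA [x + _]addrC.
apply: DeriveDef; first by rewrite /derivable quotE; exact: diff_derivable.
by rewrite /derive quotE -deriveE.
Qed.

Lemma convex_grad_le f y z : convex_fun f -> differentiable f y ->
  f y + dotv (grad f y) (z - y) <= f z.
Proof.
move=> cf df; rewrite dotv_grad -deriveE // -lerBrDl.
set q := fun h : R => h^-1 *: ((f \o shift y) (h *: (z - y)) - f y).
have q_cvg : q @ 0^'+ --> 'D_(z - y) f y.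
  move=> A /(diff_derivable df) /nbhs_ballP [_ /posnumP[e] eA].
  by exists e%:num => //= h ? /lt0r_neq0 ?; apply: eA.
apply: (cvgr_to_le q_cvg); near=> h.
have h_gt0 : 0 < h by near: h; exact: nbhs_right_gt.
have h_lt1 : h < 1 by near: h; exact: nbhs_right_lt.
rewrite /q /= -[_ *: _]/(_ * _) ler_pdivrMl //.
have := cf z y h; rewrite (ltW h_gt0) (ltW h_lt1) => /(_ isT).
have -> : h *: z + (1 - h) *: y = h *: (z - y) + y.
  by rewrite scalerBr scalerBl scale1r addrA addrAC.
lra.
Unshelve. all: by end_near.
Qed.

Lemma bregman_ge0 f x y : convex_fun f -> differentiable f y -> 0 <= bregman f x y.
Proof. by move=> cf df; have := convex_grad_le x cf df; rewrite /bregman; lra. Qed.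

Lemma smooth_descent f L x z : smooth L f ->
  f z <= f x + dotv (grad f x) (z - x) + L / 2 * sqnorm (z - x).
Proof.
move=> [df fL]; set v := z - x; set s := sqnorm v; set c := dotv (grad f x) v.
pose g t := f (x + t *: v) - (c * t + L / 2 * s * (t * t)).
have dg (t : R) : is_derive t (1 : R) g (dotv (grad f (x + t *: v)) v - (c + L * s * t)).
  apply: is_deriveB; first exact: is_derive_line.
  apply: (is_derive_eq (is_deriveD (is_deriveZ c (is_derive_id t 1))
    (is_deriveZ (L / 2 * s) (is_deriveM (is_derive_id t 1) (is_derive_id t 1))))).
  by rewrite ![_%:A]mulr1 /= -[_ *: _]/(_ * _); field.
have : g 1 <= g 0.
  apply: (@ler0_derive1_le_cc _ g 0 1); try by rewrite ?in_itv /= ?lexx ?ler01.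
  - move=> t /[!in_itv] /= /andP[t_gt0 _]; rewrite derive1E derive_val.
    rewrite subr_le0 -lerBlDl /c -dotvBl.
    apply: (le_trans (dotv_le_enorm _ _)).
    apply: (le_trans (ler_wpM2r (enorm_ge0 _) (fL _ _))).
    rewrite addrC addKr enormZ (ger0_norm (ltW t_gt0)) -!mulrA -expr2 enorm_sqr.
    by rewrite [t * s]mulrC mulrA.
  - by apply: derivable_within_continuous => t _; case: (dg t).
rewrite /g; have -> : x + 1 *: v = z by rewrite scale1r addrC subrK.
rewrite scale0r addr0 !(mulr1, mulr0, addr0, subr0); lra.
Qed.

Lemma smooth_bregman_ge f L x y z : convex_fun f -> smooth L f ->
  dotv (grad f x - grad f y) (x - z) - L / 2 * sqnorm (z - x) <= bregman f x y.
Proof.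
move=> cf sm; have := convex_grad_le z cf (sm.1 y); have := smooth_descent x z sm.
(* with the gradients abstracted, lra does not try to unfold them *)
rewrite /bregman; move: (grad f x) (grad f y) => gx gy.
have : dotv gy (z - y) = dotv gy (z - x) + dotv gy (x - y).
  by rewrite -dotvDr addrA subrK.
rewrite -(opprB z x) dotvNr dotvBl; lra.
Qed.

Lemma smooth_sqnorm_grad_le f L x y : convex_fun f -> smooth L f ->
  sqnorm (grad f x - grad f y) <= 2 * L * bregman f x y.
Proof.
move=> cf sm; have [L_gt0|L_le0] := ltrP 0 L.
  have := smooth_bregman_ge x y (x - L^-1 *: (grad f x - grad f y)) cf sm.
  move: (grad f x - grad f y) (bregman f x y) => g D.
  have -> : x - L^-1 *: g - x = - (L^-1 *: g) by rewrite addrAC subrr add0r.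
  rewrite subKr sqnormN sqnormZ dotvZr -/(sqnorm g).
  (* z = x - g / L maximises the lower bound, where it equals ||g||^2 / (2 L) *)
  have -> : L^-1 * sqnorm g - L / 2 * (L^-1 ^+ 2 * sqnorm g) = sqnorm g / (2 * L).
    by field; exact: lt0r_neq0.
  by rewrite ler_pdivrMr ?mulr_gt0 // mulrC.
have g0 : enorm (grad f x - grad f y) = 0.
  apply/le_anti; rewrite enorm_ge0 andbT.
  by apply: (le_trans (sm.2 x y)); rewrite mulr_le0_ge0 ?enorm_ge0.
have D0 : bregman f x y = 0.
  apply/le_anti; rewrite bregman_ge0 ?andbT //; last exact: sm.1.
  have := smooth_descent y x sm; rewrite /bregman.
  have : L / 2 * sqnorm (x - y) <= 0.
    by rewrite mulr_le0_ge0 ?sqnorm_ge0 // mulr_le0_ge0 // invr_ge0 ler0n.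
  lra.
by rewrite -enorm_sqr g0 D0 mulr0 expr0n.
Qed.

Lemma bregman_scale_sum n (F : 'I_n -> V -> R) c x y :
  (forall i, differentiable (F i) y) ->
  bregman (fun z => c * \sum_(i < n) F i z) x y = c * \sum_(i < n) bregman (F i) x y.
Proof.
move=> dF; have -> : (fun z => c * \sum_(i < n) F i z) = c *: \sum_(i < n) F i.
  by apply/funext => z; rewrite fct_sumE.
have dS : differentiable (\sum_(i < n) F i) y := differentiable_sum dF.
rewrite /bregman dotv_grad -deriveE; last exact: differentiableZ.
rewrite deriveZ ?derive_sum; [|by move=> i; exact: diff_derivable|exact: diff_derivable].
rewrite !fct_sumE /= -!mulrBr -!sumrB; congr (_ * _); apply: eq_bigr => i _.
by rewrite dotv_grad deriveE.
Qed.

End Differential.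

Lemma integral_scale_sum (dT : measure_display) (T : measurableType dT) (R : realType)
    (mu : {measure set T -> \bar R}) n (X : 'I_n -> T -> R) (c : R) :
  (forall i, mu.-integrable setT (fun w => (X i w)%:E)) ->
  (\int[mu]_w (c * \sum_(i < n) X i w)%:E = c%:E * \sum_(i < n) \int[mu]_w (X i w)%:E)%E.
Proof.
move=> Xint; under eq_integral do rewrite EFinM -sumEFin.
rewrite integralZl //; last exact: integrable_sum.
by rewrite integral_sum.
Qed.

Lemma integral_cst_probability (dT : measure_display) (T : measurableType dT)
    (R : realType) (P : probability T R) (a : R) :
  (\int[P]_w a%:E = a%:E)%E.
Proof. by rewrite integral_cst //= probability_setT mule1. Qed.

Section Compressor.
Variables (R : realType) (d : nat) (dO : measure_display) (Omega : measurableType dO).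
Variables (P : probability Omega R) (omega : R) (C : Omega -> 'rV[R]_d -> 'rV[R]_d).
Hypothesis CB : in_B P omega C.
Local Notation V := 'rV[R]_d.
Implicit Types (b : R) (e u v : V).

Lemma in_B_weighted_sqnorm_ge0 v : 0 <= omega * sqnorm v.
Proof.
rewrite -lee_fin; apply: le_trans (CB v).2.
by apply: integral_ge0 => w _; rewrite lee_fin sqnorm_ge0.
Qed.

Lemma in_B_integrable_coord_dev u j :
  P.-integrable setT (fun w => (C w u ord0 j)%:E - (u ord0 j)%:E)%E.
Proof.
apply: (integrableB measurableT ((CB u).1 j).1).
exact: finite_measure_integrable_cst.
Qed.

Lemma in_B_integral_coord_dev u j : (\int[P]_w ((C w u ord0 j)%:E - (u ord0 j)%:E) = 0)%E.
Proof.
rewrite integralB_EFin //; last 2 first.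
- exact: ((CB u).1 j).1.
- exact: finite_measure_integrable_cst.
by rewrite ((CB u).1 j).2 integral_cst_probability subee.
Qed.

Lemma EFin_dotv_dev v u w : (dotv v (C w u - u))%:E =
  (\sum_(j < d) (v ord0 j)%:E * ((C w u ord0 j)%:E - (u ord0 j)%:E))%E.
Proof. by rewrite /dotv -sumEFin; apply: eq_bigr => j _; rewrite !mxE EFinM EFinB. Qed.

Lemma in_B_integrable_dotv_dev v u :
  P.-integrable setT (fun w => (dotv v (C w u - u))%:E).
Proof.
under eq_fun do rewrite EFin_dotv_dev.
apply: (integrable_sum measurableT) => j _.
exact/(integrableZl measurableT)/in_B_integrable_coord_dev.
Qed.

Lemma in_B_integral_dotv_dev v u : (\int[P]_w (dotv v (C w u - u))%:E = 0)%E.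
Proof.
under eq_integral do rewrite EFin_dotv_dev.
rewrite integral_sum //; last first.
  by move=> j; exact/(integrableZl measurableT)/in_B_integrable_coord_dev.
apply: big1 => j _; rewrite integralZl //; last exact: in_B_integrable_coord_dev.
by rewrite in_B_integral_coord_dev mule0.
Qed.

Lemma in_B_integrable_sqnorm_dev u :
  P.-integrable setT (fun w => (sqnorm (C w u - u))%:E).
Proof.
apply/integrableP; split.
  apply/measurable_realfun.measurable_EFinP; rewrite /sqnorm /dotv.
  apply: measurable_sum => j; under eq_fun do rewrite !mxE.
  have mCj : measurable_fun setT (fun w => C w u ord0 j).
    by apply/measurable_realfun.measurable_EFinP; exact: measurable_int ((CB u).1 j).1.
  have mdev := measurable_realfun.measurable_funB mCj (measurable_cst (u ord0 j)).
  exact: (measurable_realfun.measurable_funM mdev mdev).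
under eq_integral do rewrite abse_EFin ger0_norm ?sqnorm_ge0 //.
exact: le_lt_trans (CB u).2 (ltry _).
Qed.

Lemma EFin_sqnorm_shift b e u w : (sqnorm (e + b *: C w u))%:E =
  ((sqnorm (e + b *: u))%:E + (2 * b)%:E * (dotv (e + b *: u) (C w u - u))%:E
   + (b ^+ 2)%:E * (sqnorm (C w u - u))%:E)%E.
Proof. by rewrite (sqnorm_shift _ _ u) !EFinD !EFinM. Qed.

Lemma in_B_integrable_sqnorm_shift b e u :
  P.-integrable setT (fun w => (sqnorm (e + b *: C w u))%:E).
Proof.
under eq_fun do rewrite EFin_sqnorm_shift.
apply: (integrableD measurableT); last exact/(integrableZl measurableT)/in_B_integrable_sqnorm_dev.
apply: (integrableD measurableT); first exact: finite_measure_integrable_cst.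
exact/(integrableZl measurableT)/in_B_integrable_dotv_dev.
Qed.

Lemma in_B_integral_sqnorm_shift_le b e u :
  (\int[P]_w (sqnorm (e + b *: C w u))%:E <=
    (sqnorm (e + b *: u) + b ^+ 2 * (omega * sqnorm u))%:E)%E.
Proof.
under eq_integral do rewrite EFin_sqnorm_shift.
rewrite integralD //; first last.
- exact/(integrableZl measurableT)/in_B_integrable_sqnorm_dev.
- apply: (integrableD measurableT); first exact: finite_measure_integrable_cst.
  exact/(integrableZl measurableT)/in_B_integrable_dotv_dev.
rewrite integralD //; first last.
- exact/(integrableZl measurableT)/in_B_integrable_dotv_dev.
- exact: finite_measure_integrable_cst.
rewrite (integralZl measurableT (in_B_integrable_dotv_dev _ _)).
rewrite (integralZl measurableT (in_B_integrable_sqnorm_dev _)).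
rewrite integral_cst_probability in_B_integral_dotv_dev mule0 adde0 EFinD (EFinM (b ^+ 2)).
apply: leeD2l; apply: lee_wpmul2l; [by rewrite lee_fin sqr_ge0 | exact: (CB u).2].
Qed.

Lemma in_B_integral_sqnorm_step_le b e u : 0 < b <= (omega + 1)^-1 ->
  (\int[P]_w (sqnorm (e + b *: C w u))%:E <=
    ((1 - b) * sqnorm e + b * sqnorm (e + u))%:E)%E.
Proof.
case/andP => b_gt0 b_le; apply: le_trans (in_B_integral_sqnorm_shift_le b e u) _.
have omega1_gt0 : 0 < omega + 1 by rewrite -invr_gt0 (lt_le_trans b_gt0 b_le).
rewrite lee_fin (sqnorm_segment b) -subr_ge0.
have -> : (1 - b) * sqnorm e + b * sqnorm (e + u) -
  ((1 - b) * sqnorm e + b * sqnorm (e + u) - b * (1 - b) * sqnorm u + b ^+ 2 * (omega * sqnorm u))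
  = b * sqnorm u * (1 - b * (omega + 1)) by ring.
rewrite mulr_ge0 ?mulr_ge0 ?sqnorm_ge0 ?(ltW b_gt0) // subr_ge0.
by rewrite -ler_pdivlMr // mul1r.
Qed.

End Compressor.

Section Node.
Variables (R : realType) (d : nat) (dO : measure_display) (Omega : measurableType dO).
Variable (P : probability Omega R).
Local Notation V := 'rV[R]_d.

Lemma in_B_integral_node_le (f : V -> R) (L omega beta bmin B : R)
    (C : Omega -> V -> V) (x xs h : V) :
  convex_fun f -> smooth L f -> in_B P omega C -> 0 < beta <= (omega + 1)^-1 ->
  bmin <= beta -> beta * omega * L <= B -> 0 <= B ->
  (\int[P]_w (omega * sqnorm ((h - grad f xs) + beta *: C w (grad f x - h)))%:E <=
    ((1 - bmin) * (omega * sqnorm (h - grad f xs)) + 2 * B * bregman f x xs)%:E)%E.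
Proof.
move=> cf sm CB hb bmin_le B_ge B_ge0.
have D_ge0 : 0 <= bregman f x xs := bregman_ge0 x cf (sm.1 xs).
have cocoercive := smooth_sqnorm_grad_le x xs cf sm.
have step := in_B_integral_sqnorm_step_le CB (h - grad f xs) (grad f x - h) hb.
have int_step := in_B_integrable_sqnorm_shift CB beta (h - grad f xs) (grad f x - h).
under eq_integral do rewrite EFinM.
rewrite integralZl //.
move: (grad f x) (grad f xs) (bregman f x xs) cocoercive step int_step D_ge0.
move=> gx gxs D cocoercive step _ D_ge0.
rewrite (_ : h - gxs + (gx - h) = gx - gxs) in step; last by rewrite addrC addrA subrK.
have [omega_ge0|omega_lt0] := leP 0 omega.
  apply: le_trans (lee_wpmul2l _ step) _; first by rewrite lee_fin.
  rewrite -EFinM lee_fin mulrDr mulrCA.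
  apply: lerD.
    by apply: ler_wpM2r; [exact: in_B_weighted_sqnorm_ge0 | rewrite lerD2l lerN2].
  have beta_omega_ge0 : 0 <= beta * omega by rewrite mulr_ge0 // ltW // (andP hb).1.
  rewrite mulrA [omega * beta]mulrC.
  apply: le_trans (ler_wpM2l beta_omega_ge0 cocoercive) _.
  have -> : beta * omega * (2 * L * D) = 2 * (beta * omega * L) * D by ring.
  by rewrite ler_wpM2r // ler_wpM2l.
(* a negative [omega] is only possible in dimension 0 *)
have sqnorm0 (v : V) : sqnorm v = 0.
  apply/le_anti; rewrite sqnorm_ge0 andbT.
  by have := in_B_weighted_sqnorm_ge0 CB v; rewrite nmulr_rge0.
under eq_integral do rewrite sqnorm0.
by rewrite integral_cst_probability mule0 lee_fin sqnorm0 !mulr0 add0r !mulr_ge0.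
Qed.

End Node.

Unset Implicit Arguments. Set Strict Implicit.

Theorem lemma4 (R : realType) (d n : nat) (dO : measure_display)
  (Omega : measurableType dO) (P : probability Omega R)
  (fs : 'I_n -> 'rV[R]_d -> R) (L : 'I_n -> R)
  (C : 'I_n -> Omega -> 'rV[R]_d -> 'rV[R]_d) (omega beta : 'I_n -> R)
  (xstar xk : 'rV[R]_d) (hk : 'I_n -> 'rV[R]_d) :
  (0 < n)%N ->
  (forall i, convex_fun (fs i)) ->
  (forall i, smooth (L i) (fs i)) ->
  let f := fun x => n%:R^-1 * \sum_(i < n) fs i x in
  (forall x, f xstar <= f x) ->
  indep_ops P C ->
  (forall i, in_B P (omega i) (C i)) ->
  (forall i, 0 < beta i <= (omega i + 1)^-1) ->
  let hk1 := fun (w : Omega) (i : 'I_n) =>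
    hk i + beta i *: C i w (grad (fs i) xk - hk i) in
  let sigk := n%:R^-1 * \sum_(i < n) omega i * sqnorm (hk i - grad (fs i) xstar) in
  let sigk1 := fun w : Omega =>
    n%:R^-1 * \sum_(i < n) omega i * sqnorm (hk1 w i - grad (fs i) xstar) in
  let betamin := \big[Num.min/1]_(i < n) beta i in
  let bwlmax := \big[Num.max/0]_(i < n) (beta i * omega i * L i) in
  (\int[P]_w (sigk1 w)%:E <=
    ((1 - betamin) * sigk + 2 * bwlmax * bregman f xk xstar)%:E)%E.
Proof.
move=> _ cvx sm f _ _ CB hb; cbv zeta.
set bmin := \big[Num.min/1]_(i < n) beta i.
set bwl := \big[Num.max/0]_(i < n) (beta i * omega i * L i).
pose X i w := omega i *
  sqnorm ((hk i - grad (fs i) xstar) + beta i *: C i w (grad (fs i) xk - hk i)).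
rewrite (eq_integral (fun w => (n%:R^-1 * \sum_(i < n) X i w)%:E)); last first.
  by move=> w _; congr (_ * _)%:E; apply: eq_bigr => i _; rewrite addrAC.
have X_int i : P.-integrable setT (fun w => (X i w)%:E).
  under eq_fun do rewrite EFinM.
  exact/(integrableZl measurableT)/in_B_integrable_sqnorm_shift.
have node i : (\int[P]_w (X i w)%:E <=
    ((1 - bmin) * (omega i * sqnorm (hk i - grad (fs i) xstar))
     + 2 * bwl * bregman (fs i) xk xstar)%:E)%E.
  apply: (in_B_integral_node_le xk xstar (hk i) (cvx i) (sm i) (CB i) (hb i)).
  - exact: bigmin_le.
  - exact: le_bigmax (fun j => beta j * omega j * L j) i.
  - exact: bigmax_ge_id.
rewrite integral_scale_sum //.
have n_inv_ge0 : (0 <= (n%:R^-1)%:E :> \bar R)%E by rewrite lee_fin invr_ge0.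
apply: le_trans (lee_wpmul2l n_inv_ge0 (lee_sum _ (fun i _ => node i))) _.
rewrite sumEFin -EFinM lee_fin /f bregman_scale_sum; last by move=> i; exact: (sm i).1.
by rewrite big_split /= mulrDr -!mulr_sumr mulrCA [_ * (2 * bwl * _)]mulrCA.
Qed.
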